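(* Let $n,s,k$ be positive integers with $n\ge(s+1)k$. Suppose that for any cross-dependent families $\mathcal G_1,\ldots,\mathcal G_{s+1}\subset\binom{[n]}{k}$ we have $\min_i|\mathcal G_i|\le\binom{n}{k}-\binom{n-s}{k}$. Then for any cross-dependent families $\mathcal F_1,\ldots,\mathcal F_{s+1}\subset\binom{[n+1]}{k}$ we have $\min_i|\mathcal F_i|\le\binom{n+1}{k}-\binom{n+1-s}{k}$.
   Context: $[n]=\{1,\ldots,n\}$ and $\binom{X}{k}$ denotes the family of all $k$-element subsets of $X$. Families $\mathcal F_1,\ldots,\mathcal F_{s+1}$ are called cross-dependent if there are no pairwise disjoint sets $F_1,\ldots,F_{s+1}$ with $F_i\in\mathcal F_i$ for every $i$. *)

From mathcomp Require Import all_boot.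
Set Implicit Arguments. Unset Strict Implicit. Unset Printing Implicit Defensive.

Definition kuniform (n k : nat) (F : {set {set 'I_n}}) : Prop :=
  forall A, A \in F -> #|A| = k.

Definition cross_dependent (n s : nat) (F : 'I_s.+1 -> {set {set 'I_n}}) : Prop :=
  ~ exists A : 'I_s.+1 -> {set 'I_n},
      (forall i, A i \in F i) /\
      (forall i j, i != j -> [disjoint A i & A j]).

From mathcomp Require Import all_boot perm zify.
From Stdlib Require Import Classical.
Set Implicit Arguments. Unset Strict Implicit. Unset Printing Implicit Defensive.

(* Shifting (compression) preserves sizes, uniformity and cross-dependence, so
   we may assume every F_i is shifted towards small elements.  The deletions
   F_i(not n+1), seen as families on [n], are then cross-dependent, so for some i
   the hypothesis gives |F_i(not n+1)| <= C(n,k) - C(n-s,k).  The k-sets of [n]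
   outside F_i(not n+1) form an up-shifted family H with |H| >= C(n-s,k), hence
   by Lovasz's form of the Kruskal-Katona theorem |shadow H| >= C(n-s,k-1).
   Because F_i is shifted, shadow H is disjoint from the link F_i(n+1), so
   |F_i(n+1)| <= C(n,k-1) - C(n-s,k-1), and Pascal's rule adds the two bounds
   up to C(n+1,k) - C(n+1-s,k). *)

Section Shift.
Variable T : finType.
Implicit Types (x y z : T) (A C : {set T}) (F : {set {set T}}).

Definition shift x y A := if (y \in A) && (x \notin A) then x |: (A :\ y) else A.

Lemma shiftE x y A : y \in A -> x \notin A -> shift x y A = x |: (A :\ y).
Proof. by rewrite /shift => -> ->. Qed.

Lemma card_shift x y A : #|shift x y A| = #|A|.
Proof.
rewrite /shift; case: ifP => // /andP[yA xA].
by rewrite cardsU1 (cardsD1 y A) yA !inE (negbTE xA) andbF.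
Qed.

Lemma shiftK x y A : y \in A -> x \notin A -> shift y x (shift x y A) = A.
Proof.
move=> yA xA; have nxy : x != y by apply: contraNneq xA => ->.
have yS : y \notin x |: (A :\ y) by rewrite !inE eqxx eq_sym (negbTE nxy).
by rewrite shiftE // shiftE ?setU11 // setU1K ?setD1K // !inE (negbTE xA) andbF.
Qed.

Lemma shiftU1 z x y A : z != x -> z != y -> shift x y (z |: A) = z |: shift x y A.
Proof.
move=> nzx nzy; rewrite /shift !inE ![_ == z]eq_sym (negbTE nzx) (negbTE nzy) /=.
case: ifP => // _; apply/setP => u; rewrite !inE.
by case: (u =P z) => [->|_] /=; rewrite ?eqxx ?(negbTE nzx) ?nzy.
Qed.

Lemma preimset_tperm x y A : x \notin A -> tperm x y @^-1: A = shift x y A.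
Proof.
move=> xA; have nyx : y \in A -> y != x by apply: contraTneq => ->.
apply/setP => u; rewrite /shift xA andbT inE.
case: ifP => yA; case: tpermP => [->|->|/eqP nux /eqP nuy];
  by rewrite ?inE ?eqxx ?yA ?(negbTE xA) ?(negbTE (nyx _)) ?(negbTE nux) ?nuy.
Qed.

Lemma shift_moved x y A : shift x y A != A ->
  [/\ y \in A, x \notin A, x \in shift x y A & y \notin shift x y A].
Proof.
rewrite /shift; case: ifP => [/andP[yA xA] _|]; last by rewrite eqxx.
have nyx : y != x by apply: contraTneq yA => ->.
by rewrite !inE !eqxx (negbTE nyx); split.
Qed.

Lemma shift_notin_neq x y F A : A \in F -> shift x y A \notin F -> shift x y A != A.
Proof. by move=> AF; apply: contraNneq => ->. Qed.

Definition shift_in x y F A := if shift x y A \in F then A else shift x y A.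
Definition shift_fam x y F := shift_in x y F @: F.

Lemma shift_in_inj x y F : {in F &, injective (shift_in x y F)}.
Proof.
move=> A B AF BF; rewrite /shift_in.
case: ifP => SA; case: ifP => SB.
- by [].
- by move=> eAB; rewrite -eAB AF in SB.
- by move=> eAB; rewrite eAB BF in SA.
have /shift_moved[yA xA _ _] := shift_notin_neq AF (negbT SA).
have /shift_moved[yB xB _ _] := shift_notin_neq BF (negbT SB).
by move=> eAB; rewrite -(shiftK yA xA) eAB shiftK.
Qed.

Lemma card_shift_fam x y F : #|shift_fam x y F| = #|F|.
Proof. exact/card_in_imset/shift_in_inj. Qed.

Lemma shift_fam_stay x y F C : C \in shift_fam x y F -> x \notin C ->
  C \in F /\ shift x y C \in F.
Proof.
case/imsetP=> A AF ->; rewrite /shift_in; case: ifP => // SA.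
by have /shift_moved[_ _ ->] := shift_notin_neq AF (negbT SA).
Qed.

Lemma shift_fam_new x y F C : C \in shift_fam x y F -> C \notin F ->
  [/\ x \in C, y \notin C & shift y x C \in F].
Proof.
case/imsetP=> A AF ->; rewrite /shift_in; case: ifP => SA; first by rewrite AF.
have /shift_moved[yA xA xS yS] := shift_notin_neq AF (negbT SA).
by rewrite shiftK.
Qed.
End Shift.

Lemma disjoint_preimset (aT rT : finType) (f : aT -> rT) (A B : {set rT}) :
  [disjoint A & B] -> [disjoint f @^-1: A & f @^-1: B].
Proof. by rewrite -!setI_eq0 -preimsetI => /eqP ->; rewrite preimset0. Qed.

Lemma disjoint_imset (aT rT : finType) (f : aT -> rT) (A B : {set aT}) :
  injective f -> [disjoint A & B] -> [disjoint f @: A & f @: B].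
Proof.
move=> injf; rewrite -!setI_eq0 -imsetI => [/eqP->|]; first by rewrite imset0.
by move=> ? ? _ _ /injf.
Qed.

Lemma shift_fam_uniform N k (x y : 'I_N) F :
  kuniform k F -> kuniform k (shift_fam x y F).
Proof.
move=> Fu _ /imsetP[A AF ->]; rewrite /shift_in.
by case: ifP => _; rewrite ?card_shift Fu.
Qed.

Lemma shift_fam_cross_dependent N s (x y : 'I_N) (F : 'I_s.+1 -> {set {set 'I_N}}) :
  cross_dependent F -> cross_dependent (fun i => shift_fam x y (F i)).
Proof.
move=> CD [A [AF Adis]]; apply: CD.
case: (pickP (fun i => A i \notin F i)) => [i0 /= Ai0|inF]; last first.
  by exists A; split=> // i; apply/negPn/negbT; exact: inF.
have [xA0 yA0 SA0] := shift_fam_new (AF i0) Ai0.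
(* A i0 is a new member; exchanging x and y in every A i pulls the whole
   disjoint system back into the original families. *)
have xA i : i != i0 -> x \notin A i.
  by move=> ne; rewrite (disjointFr (Adis i0 i _) xA0) // eq_sym.
exists (fun i => tperm x y @^-1: A i); split; last by move=> i j /Adis /disjoint_preimset.
move=> i; have [->|ne] := eqVneq i i0; first by rewrite tpermC preimset_tperm.
by rewrite preimset_tperm ?xA //; have [] := shift_fam_stay (AF i) (xA i ne).
Qed.

Section Shifting.
Variable N : nat.
Implicit Types (x y : 'I_N) (A : {set 'I_N}) (F : {set {set 'I_N}}).

Definition shift_closed (R : rel nat) F :=
  forall x y A, R x y -> A \in F -> shift x y A \in F.
Definition shifted := shift_closed ltn.
Definition upshifted := shift_closed gtn.

Definition weight A := \sum_(z in A) val z.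
Definition fam_weight F := \sum_(A in F) weight A.

Lemma weight_shift_lt x y A : x < y -> shift x y A != A ->
  weight (shift x y A) < weight A.
Proof.
move=> lxy /shift_moved[yA xA _ _]; rewrite shiftE // /weight big_setU1 /=.
  by rewrite [X in _ < X](big_setD1 y yA) /= ltn_add2r.
by rewrite !inE (negbTE xA) andbF.
Qed.

Lemma weight_shift_in_le x y F A : x < y -> weight (shift_in x y F A) <= weight A.
Proof.
move=> lxy; rewrite /shift_in; case: ifP => // _.
have [-> //|nSA] := eqVneq (shift x y A) A.
exact/ltnW/weight_shift_lt.
Qed.

Lemma fam_weight_shift_le x y F : x < y -> fam_weight (shift_fam x y F) <= fam_weight F.
Proof.
move=> lxy; rewrite /fam_weight big_imset /=; last exact: shift_in_inj.
by apply: leq_sum => A _; apply: weight_shift_in_le.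
Qed.

Lemma fam_weight_shift_lt x y F A : x < y -> A \in F -> shift x y A \notin F ->
  fam_weight (shift_fam x y F) < fam_weight F.
Proof.
move=> lxy AF SA; rewrite /fam_weight big_imset /=; last exact: shift_in_inj.
rewrite (bigD1 A AF) [X in _ < X](bigD1 A AF) /= -addSn leq_add //.
  by rewrite /shift_in (negbTE SA) weight_shift_lt // (shift_notin_neq AF).
by apply: leq_sum => B _; apply: weight_shift_in_le.
Qed.

Lemma exists_shifted s (P : ('I_s.+1 -> {set {set 'I_N}}) -> Prop)
    (F : 'I_s.+1 -> {set {set 'I_N}}) :
  (forall x y (G : 'I_s.+1 -> {set {set 'I_N}}),
     x < y -> P G -> P (fun i => shift_fam x y (G i))) ->
  P F ->
  exists G : 'I_s.+1 -> {set {set 'I_N}},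
    [/\ P G, forall i, #|G i| = #|F i| & forall i, shifted (G i)].
Proof.
move=> Pshift; have [w] := ubnP (\sum_i fam_weight (F i)).
elim: w F => // w IH F ltFw PF.
case: (classic (exists i x y A, [/\ x < y, A \in F i & shift x y A \notin F i]))
  => [[i0 [x [y [A [lxy AF SA]]]]]|stable]; last first.
  exists F; split=> // i x y A lxy AF; apply/negPn/negP => SA.
  by apply: stable; exists i, x, y, A.
have [|G [PG cardG shG]] := IH (fun i => shift_fam x y (F i)) _ (Pshift _ _ _ lxy PF).
  rewrite ltnS in ltFw; apply: leq_trans ltFw.
  rewrite (bigD1 i0) // [X in _ < X](bigD1 i0) //= -addSn.
  rewrite leq_add ?(fam_weight_shift_lt lxy AF SA) //.
  by apply: leq_sum => i _; apply: fam_weight_shift_le.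
by exists G; split=> // i; rewrite cardG card_shift_fam.
Qed.
End Shifting.

Lemma upshifted_complement N k (F : {set {set 'I_N}}) :
  shifted F -> upshifted ([set A : {set 'I_N} | #|A| == k] :\: F).
Proof.
move=> Fsh x y A /= ltyx; rewrite !inE card_shift => /andP[AF ->]; rewrite andbT.
apply: contra AF => SF; have [<- //|/shift_moved[yA xA _ _]] := eqVneq (shift x y A) A.
by rewrite -(shiftK yA xA); apply: Fsh.
Qed.

Lemma card_disjoint_uniform N k (F G : {set {set 'I_N}}) :
  kuniform k F -> kuniform k G -> [disjoint F & G] -> #|F| + #|G| <= 'C(N, k).
Proof.
move=> Fu Gu; rewrite -setI_eq0 -cardsUI => /eqP->; rewrite cards0 addn0.
rewrite -[N in 'C(N, _)]card_ord -card_draws; apply/subset_leq_card/subsetP => A.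
by rewrite !inE => /orP[/Fu|/Gu] ->.
Qed.

Definition shadow (T : finType) (K : {set {set T}}) : {set {set T}} :=
  [set A :\ a | A in K, a in A].

Lemma shadow_gt0 N k (K : {set {set 'I_N}}) :
  kuniform k.+1 K -> 0 < #|K| -> 0 < #|shadow K|.
Proof.
move=> Ku /card_gt0P[A AK]; have /card_gt0P[a aA] : 0 < #|A| by rewrite Ku.
by apply/card_gt0P; exists (A :\ a); apply/imset2P; exists A a.
Qed.

Lemma shadow_uniform N k (K : {set {set 'I_N}}) :
  kuniform k.+1 K -> kuniform k (shadow K).
Proof.
by move=> Ku _ /imset2P[A a AK aA ->]; have := Ku A AK; rewrite (cardsD1 a) aA => -[].
Qed.

Section DeletionLink.
Variable n : nat.
Implicit Types (B C D : {set 'I_n}) (A : {set 'I_n.+1}) (K : {set {set 'I_n.+1}}).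

Definition lift_set B : {set 'I_n.+1} := lift ord_max @: B.
Definition deletion K : {set {set 'I_n}} := [set B | lift_set B \in K].
Definition link K : {set {set 'I_n}} := [set B | ord_max |: lift_set B \in K].

Lemma mem_lift_set B z : (lift ord_max z \in lift_set B) = (z \in B).
Proof. exact/mem_imset/lift_inj. Qed.

Lemma ord_max_notin_lift_set B : ord_max \notin lift_set B.
Proof. by apply/imsetP => -[z _ /eqP]; rewrite (negbTE (neq_lift _ _)). Qed.

Lemma card_lift_set B : #|lift_set B| = #|B|.
Proof. exact/card_imset/lift_inj. Qed.

Lemma lift_set_inj : injective lift_set.
Proof. exact/imset_inj/lift_inj. Qed.

Lemma setU1_lift_set_inj : injective (fun B => ord_max |: lift_set B).
Proof.
move=> B C /= eBC; apply: lift_set_inj.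
by rewrite -(setU1K (ord_max_notin_lift_set B)) eBC setU1K // ord_max_notin_lift_set.
Qed.

Lemma lift_setP A : ord_max \notin A -> exists B, A = lift_set B.
Proof.
move=> mA; exists (lift ord_max @^-1: A); apply/setP => u.
case: (unliftP ord_max u) => [z|] ->; first by rewrite mem_lift_set inE.
by rewrite (negbTE mA) (negbTE (ord_max_notin_lift_set _)).
Qed.

Lemma lift_setD1 B z : lift_set (B :\ z) = lift_set B :\ lift ord_max z.
Proof.
apply/setP => u; rewrite !inE; case: (unliftP ord_max u) => [v|] ->.
  by rewrite !mem_lift_set !inE (inj_eq (@lift_inj _ ord_max)).
by rewrite !(negbTE (ord_max_notin_lift_set _)) andbF.
Qed.

Lemma lift_setU1 B z : lift_set (z |: B) = lift ord_max z |: lift_set B.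
Proof. exact: imsetU1. Qed.

Lemma lift_set_shift x y B :
  lift_set (shift x y B) = shift (lift ord_max x) (lift ord_max y) (lift_set B).
Proof. by rewrite /shift !mem_lift_set; case: ifP; rewrite // lift_setU1 lift_setD1. Qed.

Lemma card_deletion_link K : #|K| = #|deletion K| + #|link K|.
Proof.
pose M := [set A : {set 'I_n.+1} | ord_max \in A].
rewrite -(cardsID M K) addnC.
have -> : K :\: M = lift_set @: deletion K.
  apply/setP => A; rewrite !inE; apply/andP/imsetP => [[mA AK]|[B]].
    by have [B eB] := lift_setP mA; exists B; rewrite // inE -eB.
  by rewrite inE => BK ->; rewrite ord_max_notin_lift_set.
have -> : K :&: M = (fun B => ord_max |: lift_set B) @: link K.
  apply/setP => A; rewrite !inE; apply/andP/imsetP => [[AK mA]|[B]].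
    have [B eB] := lift_setP (negbT (setD11 ord_max A)).
    by exists B; rewrite ?inE -eB setD1K.
  by rewrite inE => BK ->; rewrite setU11.
by rewrite !card_imset //; [apply: setU1_lift_set_inj | apply: lift_set_inj].
Qed.

Lemma deletion_uniform k K : kuniform k K -> kuniform k (deletion K).
Proof. by move=> Ku B; rewrite inE => /Ku; rewrite card_lift_set. Qed.

Lemma link_uniform k K : kuniform k.+1 K -> kuniform k (link K).
Proof.
move=> Ku B; rewrite inE => /Ku.
by rewrite cardsU1 ord_max_notin_lift_set card_lift_set => -[].
Qed.

Lemma deletion_shift_closed R K : shift_closed R K -> shift_closed R (deletion K).
Proof.
by move=> KR x y B xy; rewrite !inE lift_set_shift; apply: KR; rewrite !lift_max.
Qed.

Lemma link_shift_closed R K : shift_closed R K -> shift_closed R (link K).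
Proof.
move=> KR x y B xy; rewrite !inE lift_set_shift -shiftU1 ?neq_lift //.
by apply: KR; rewrite !lift_max.
Qed.

Lemma deletion_cross_dependent s (F : 'I_s.+1 -> {set {set 'I_n.+1}}) :
  cross_dependent F -> cross_dependent (fun i => deletion (F i)).
Proof.
move=> CD [A [AF Adis]]; apply: CD; exists (fun i => lift_set (A i)); split.
  by move=> i; have := AF i; rewrite inE.
by move=> i j /Adis; apply/disjoint_imset/lift_inj.
Qed.

Lemma link_sub_deletion_shadow K : link K \subset deletion (shadow K).
Proof.
apply/subsetP => B; rewrite !inE => BK.
by apply/imset2P; exists (ord_max |: lift_set B) ord_max;
  rewrite ?setU11 ?setU1K ?ord_max_notin_lift_set.
Qed.

Lemma shadow_link_sub_link_shadow K : shadow (link K) \subset link (shadow K).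
Proof.
apply/subsetP => _ /imset2P[C c CK cC ->]; rewrite inE in CK; rewrite inE lift_setD1.
have -> : ord_max |: (lift_set C :\ lift ord_max c) =
          (ord_max |: lift_set C) :\ lift ord_max c.
  by apply/setP => u; rewrite !inE; case: eqP => // ->; rewrite neq_lift.
by apply/imset2P; exists (ord_max |: lift_set C) (lift ord_max c);
  rewrite // !inE mem_lift_set cC orbT.
Qed.

Lemma card_link_shadow K : #|link K| + #|shadow (link K)| <= #|shadow K|.
Proof.
rewrite (card_deletion_link (shadow K)) leq_add ?subset_leq_card //.
  exact: link_sub_deletion_shadow.
exact: shadow_link_sub_link_shadow.
Qed.

Lemma shadow_deletion_sub_link K : upshifted K -> shadow (deletion K) \subset link K.
Proof.
move=> Kup; apply/subsetP => _ /imset2P[B b BK bB ->]; rewrite inE in BK.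
have ltb : lift ord_max b < n by rewrite lift_max.
rewrite inE lift_setD1 -shiftE ?mem_lift_set ?ord_max_notin_lift_set //.
by apply: Kup BK.
Qed.

Lemma shifted_link_setU1 K D a : shifted K -> D \in link K -> a \notin D ->
  a |: D \in deletion K.
Proof.
move=> Ksh DK aD; rewrite inE in DK; rewrite inE lift_setU1.
have lta : lift ord_max a < n by rewrite lift_max.
rewrite -(setU1K (ord_max_notin_lift_set D)) -shiftE ?setU11 //.
  by apply: Ksh DK.
by rewrite !inE eq_sym (negbTE (neq_lift _ _)) mem_lift_set.
Qed.
End DeletionLink.

(* Lovasz's form of the Kruskal-Katona theorem, for up-shifted families; the
   induction splits the ground set at its largest element. *)
Lemma card_shadow_upshifted N k m (K : {set {set 'I_N}}) :
  k < m -> kuniform k.+1 K -> upshifted K ->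
  'C(m, k.+1) <= #|K| -> 'C(m, k) <= #|shadow K|.
Proof.
elim: N k m K => [|N IH] k m K ltkm Ku Kup CK.
  have K0 : K = set0.
    apply/setP => A; rewrite inE; apply/negbTE/negP => /Ku cA.
    by have := max_card A; rewrite cA card_ord.
  by move: CK; rewrite K0 cards0 leqn0 -[_ == 0]negbK -lt0n bin_gt0 ltkm.
case: k ltkm Ku CK => [|k] ltkm Ku CK.
  by rewrite bin0 (shadow_gt0 Ku) // (leq_trans _ CK) // bin_gt0.
case: m ltkm CK => [//|m] ltkm CK.
have KDL := card_deletion_link K.
have DL : #|shadow (deletion K)| <= #|link K|.
  exact/subset_leq_card/shadow_deletion_sub_link.
have LS := card_link_shadow K.
have Du := deletion_uniform Ku; have Lu := link_uniform Ku.
have Dup := deletion_shift_closed Kup; have Lup := link_shift_closed Kup.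
rewrite !binS in CK *.
have [CL|LC] := leqP 'C(m, k.+1) #|link K|.
  by have := IH k m _ ltkm Lu Lup CL; lia.
have [ltkm'|lemk] := ltnP k.+1 m.
  by have := IH k.+1 m _ ltkm' Du Dup; lia.
have em : m = k.+1 by lia.
rewrite em binn bin_small // in CK LC.
have /(shadow_gt0 Du) : 0 < #|deletion K| by lia.
lia.
Qed.

Lemma shifted_card_bound n m k (F : {set {set 'I_n.+1}}) :
  k < m -> m <= n -> kuniform k.+1 F -> shifted F ->
  #|deletion F| <= 'C(n, k.+1) - 'C(m, k.+1) ->
  #|F| <= 'C(n.+1, k.+1) - 'C(m.+1, k.+1).
Proof.
move=> ltkm lemn Fu Fsh DF; have Du := deletion_uniform Fu.
set H := [set A : {set 'I_n} | #|A| == k.+1] :\: deletion F.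
have Hu : kuniform k.+1 H by move=> A; rewrite !inE => /andP[_ /eqP].
have Hup : upshifted H := upshifted_complement (deletion_shift_closed Fsh).
have cardH : #|H| = 'C(n, k.+1) - #|deletion F|.
  rewrite cardsD card_draws card_ord (setIidPr _) //.
  by apply/subsetP => A /Du; rewrite inE => ->.
have CH : 'C(m, k.+1) <= #|H| by have := leq_bin2l k.+1 lemn; lia.
have SH : 'C(m, k) <= #|shadow H| := card_shadow_upshifted ltkm Hu Hup CH.
have LH : [disjoint link F & shadow H].
  rewrite disjoint_subset; apply/subsetP => D DL; rewrite inE.
  apply/imset2P => -[A a AH aA eD].
  have aD : a \notin D by rewrite eD setD11.
  have := shifted_link_setU1 Fsh DL aD; rewrite eD setD1K //.
  by move: AH; rewrite inE => /andP[/negbTE->].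
have LSH := card_disjoint_uniform (link_uniform Fu) (shadow_uniform Hu) LH.
have := leq_bin2l k lemn; have := leq_bin2l k.+1 lemn.
rewrite (card_deletion_link F) !binS; lia.
Qed.

Theorem proposition1 (n s k : nat) (hn : 0 < n) (hs : 0 < s) (hk : 0 < k)
  (hnsk : (s.+1) * k <= n) :
  (forall G : 'I_s.+1 -> {set {set 'I_n}},
      (forall i, kuniform k (G i)) -> cross_dependent G ->
      exists i, #|G i| <= 'C(n, k) - 'C(n - s, k)) ->
  forall F : 'I_s.+1 -> {set {set 'I_n.+1}},
    (forall i, kuniform k (F i)) -> cross_dependent F ->
    exists i, #|F i| <= 'C(n.+1, k) - 'C(n.+1 - s, k).
Proof.
case: k hk hnsk => // k _ hnsk hyp F Fu Fcd.
pose P (G : 'I_s.+1 -> {set {set 'I_n.+1}}) :=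
  (forall i, kuniform k.+1 (G i)) /\ cross_dependent G.
have Pshift (x y : 'I_n.+1) G : x < y -> P G -> P (fun i => shift_fam x y (G i)).
  move=> _ [Gu Gcd]; split=> [i|]; first exact: shift_fam_uniform.
  exact: shift_fam_cross_dependent.
have [G [[Gu Gcd] cardG Gsh]] := exists_shifted Pshift (conj Fu Fcd).
have [i Di] := hyp _ (fun i => deletion_uniform (Gu i)) (deletion_cross_dependent Gcd).
exists i; rewrite -cardG subSn; last by nia.
by apply: shifted_card_bound; rewrite ?leq_subr //; nia.
Qed.
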